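(* Let $G=G_1\,\Box\,\cdots\,\Box\,G_D$ be a cartesian product of cycle digraphs $C_{n}$ ($n\ge3$) and simple directed paths $P_n$ ($n\ge2$). Let $c_{\mathrm{even}}$ be the number of factors that are cycle digraphs with an even number of vertices. Then $$\frac{\dim\ker\mathcal D(G)}{r}=\begin{cases}2^{c_{\mathrm{even}}}&\text{if no factor is a simple directed path with an even number of vertices},\\ 0&\text{otherwise.}\end{cases}$$ In particular, if no factor is a path with an even number of vertices, then $\dim\ker\mathcal D(G)\ge r$.
   Context: The cycle digraph $C_n$ has vertex set $\{1,\dots,n\}$ and edges $i\to i+1$ for $1\le i\le n-1$ together with $n\to1$. The simple directed path $P_n$ has vertex set $\{1,\dots,n\}$ and edges $i\to i+1$ for $1\le i\le n-1$. For a directed graph without multiple edges, the anti-symmetrized adjacency matrix $A_{\mathrm{as}}$ is the $|V|\times|V|$ matrix with: - $(A_{\mathrm{as}})_{ij}=1$ if an edge leaves $i$ and enters $j$; - $(A_{\mathrm{as}})_{ij}=-1$ if an edge leaves $j$ and enters $i$; - $(A_{\mathrm{as}})_{ij}=0$ otherwise. Let $\gamma_1,\dots,\gamma_D$ be complex $r\times r$ matrices satisfying $\gamma_\mu\gamma_\nu+\gamma_\nu\gamma_\mu=2\delta_{\mu\nu}\mathbf 1_r$. For $G_\mu$ with $n_\mu$ vertices, define $$\mathcal D(G)=\sum_{\mu=1}^D\Big(\mathbf 1_{n_D}\otimes\cdots\otimes\mathbf 1_{n_{\mu+1}}\otimes A_{\mathrm{as}}(G_\mu)\otimes\mathbf 1_{n_{\mu-1}}\otimes\cdots\otimes\mathbf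 1_{n_1}\Big)\otimes\gamma_\mu,$$ where $\otimes$ is the Kronecker product and $\mathbf 1_k$ is the $k\times k$ identity. *)

From HB Require Import structures.
From mathcomp Require Import all_boot all_order all_algebra.
From mathcomp Require Import complex mxtens.
From mathcomp Require Import reals.

Set Implicit Arguments.
Unset Strict Implicit.
Unset Printing Implicit Defensive.

Import Order.TTheory GRing.Theory Num.Theory.
Local Open Scope ring_scope.

(* A factor of the cartesian product: a cycle digraph C_n or a simple
   directed path P_n.  Vertices {1,..,n} are encoded as 'I_n = {0,..,n-1}
   (vertex k+1 of the paper is the ordinal k). *)
Inductive factor := Cyc of nat | Pth of nat.

Definition nverts (f : factor) : nat :=
  match f with Cyc n => n | Pth n => n end.

Definition fedge (f : factor) (i j : 'I_(nverts f)) : bool :=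
  match f with
  | Cyc n => (j == (i.+1 %% n)%N :> nat)
  | Pth n => (j == i.+1 :> nat)
  end.

Definition Aas (C : nzRingType) (n : nat) (e : rel 'I_n) : 'M[C]_n :=
  \matrix_(i, j) (if e i j then 1 else if e j i then -1 else 0).

Fixpoint kron_size (D : nat) (n : 'I_D -> nat) (l : seq 'I_D) : nat :=
  match l with [::] => 1%N | nu :: l' => (n nu * kron_size n l')%N end.

Fixpoint kron (C : nzRingType) (D : nat) (n : 'I_D -> nat)
    (M : forall nu : 'I_D, 'M[C]_(n nu)) (l : seq 'I_D) : 'M[C]_(kron_size n l) :=
  match l return 'M[C]_(kron_size n l) with
  | [::] => 1%:M
  | nu :: l' => M nu *t kron M l'
  end.

(* The Kronecker
   factors are ordered  1_{n_D} (x) ... (x) A_as(G_mu) (x) ... (x) 1_{n_1}. *)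
Definition Dop (C : nzRingType) (D r : nat) (G : 'I_D -> factor)
    (gam : 'I_D -> 'M[C]_r) :
    'M[C]_(kron_size (fun nu => nverts (G nu)) (rev (enum 'I_D)) * r) :=
  \sum_(mu < D)
    (kron (fun nu : 'I_D =>
             if nu == mu then @Aas C _ (@fedge (G nu)) else (1%:M : 'M[C]_(nverts (G nu))))
          (rev (enum 'I_D))) *t gam mu.

(* dimension of the kernel {v | A v = 0} of a matrix acting on column vectors *)
Definition dimker (F : fieldType) (m n : nat) (A : 'M[F]_(m, n)) : nat :=
  \rank (kermx A^T).

Definition valid_factor (f : factor) : bool :=
  match f with Cyc n => (3 <= n)%N | Pth n => (2 <= n)%N end.

Definition is_even_cycle (f : factor) : bool :=
  match f with Cyc n => ~~ odd n | Pth _ => false end.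

Definition is_even_path (f : factor) : bool :=
  match f with Pth n => ~~ odd n | Cyc _ => false end.

Definition clifford (C : nzRingType) (D r : nat) (gam : 'I_D -> 'M[C]_r) : Prop :=
  forall mu nu : 'I_D,
    gam mu *m gam nu + gam nu *m gam mu = (if mu == nu then 2 else 0)%:M.

(* Transposed, D(G) becomes  X = sum_mu A_mu (x) h_mu  with
   A_mu = 1 (x) ... (x) A_as(G_mu) (x) ... (x) 1  and  h_mu = - gamma_mu^T.
   The A_mu pairwise commute and are real and antisymmetric, hence
   skew-Hermitian, and the h_mu again satisfy the Clifford relations, so
   X^2 = sum_mu A_mu^2 (x) 1 with every -A_mu^2 positive semidefinite.  The
   kernel of X is therefore the common kernel of the A_mu (x) 1, namely
   (ker A_as(G_1) (x) ... (x) ker A_as(G_D)) (x) C^r.  A kernel vector u of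
   A_as(G_mu) satisfies u_(j-1) = u_(j+1), so it is constant on each parity
   class; the wrap-around of C_n identifies the two classes when n is odd,
   while for P_n the end conditions kill the odd class, and also the even one
   when n is even.  So the kernel of A_as(C_n) has dimension 1 or 2 and that
   of A_as(P_n) dimension 1 or 0 according as n is odd or even. *)

From HB Require Import structures.
From mathcomp Require Import all_boot all_order all_algebra.
From mathcomp Require Import complex mxtens.
From mathcomp Require Import reals.
From mathcomp Require Import zify.

Set Implicit Arguments.
Unset Strict Implicit.
Unset Printing Implicit Defensive.

Import Order.TTheory GRing.Theory Num.Theory.
Local Open Scope ring_scope.

Section TensorProduct.
Variable R : comPzRingType.

Lemma tensmx11 m n : (1%:M : 'M[R]_m) *t (1%:M : 'M[R]_n) = 1%:M.
Proof.
apply/matrixP=> i j; case: (mxtens_indexP i)=> i0 i1; case: (mxtens_indexP j)=> j0 j1.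
rewrite tensmxE !mxE (can_eq (@mxtens_indexK _ _)) xpair_eqE.
by case: (i0 == j0); case: (i1 == j1); rewrite /= ?mulr1 ?mulr0.
Qed.

Lemma tensmxDl m n p q (A B : 'M[R]_(m, n)) (M : 'M[R]_(p, q)) :
  (A + B) *t M = A *t M + B *t M.
Proof. by apply/matrixP=> i j; rewrite !mxE mulrDl. Qed.

Lemma tensmxDr m n p q (A B : 'M[R]_(m, n)) (M : 'M[R]_(p, q)) :
  M *t (A + B) = M *t A + M *t B.
Proof. by apply/matrixP=> i j; rewrite !mxE mulrDr. Qed.

Lemma tensmxNl m n p q (A : 'M[R]_(m, n)) (M : 'M[R]_(p, q)) :
  (- A) *t M = - (A *t M).
Proof. by apply/matrixP=> i j; rewrite !mxE mulNr. Qed.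

Lemma tensmxNr m n p q (A : 'M[R]_(m, n)) (M : 'M[R]_(p, q)) :
  M *t (- A) = - (M *t A).
Proof. by apply/matrixP=> i j; rewrite !mxE mulrN. Qed.

End TensorProduct.

(* Tensoring the full-rank factorizations [A = col_base A *m row_base A] gives both bounds. *)
Lemma mxrank_tens (F : fieldType) m n p q (A : 'M[F]_(m, n)) (B : 'M[F]_(p, q)) :
  \rank (A *t B) = (\rank A * \rank B)%N.
Proof.
apply/eqP; rewrite eqn_leq; apply/andP; split.
  rewrite -[A in A *t B](mulmx_base A) -[B in _ *t B](mulmx_base B) -tensmx_mul.
  exact: leq_trans (mxrankM_maxl _ _) (rank_leq_col _).
have /row_fullP[LA HLA] := col_base_full A.
have /row_fullP[LB HLB] := col_base_full B.
have /row_freeP[RA HRA] := row_base_free A.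
have /row_freeP[RB HRB] := row_base_free B.
have E : (LA *t LB) *m ((col_base A *m row_base A) *t (col_base B *m row_base B))
    *m (RA *t RB) = 1%:M.
  rewrite !tensmx_mul [LA *m (_ *m _)]mulmxA [LB *m (_ *m _)]mulmxA HLA HLB !mul1mx.
  by rewrite HRA HRB tensmx11.
rewrite !mulmx_base in E; rewrite -(mxrank1 F (\rank A * \rank B)) -E.
exact: leq_trans (mxrankM_maxl _ _) (mxrankM_maxr _ _).
Qed.

Section Kronecker.
Variables (R : comNzRingType) (D : nat) (n : 'I_D -> nat).
Implicit Types (M : forall nu, 'M[R]_(n nu)) (l : seq 'I_D).

Lemma eq_kron M M' l :
  (forall nu, nu \in l -> M nu = M' nu) -> kron M l = kron M' l.
Proof.
elim: l => [|nu l IH] //= eqMM'; rewrite eqMM' ?mem_head // IH // => mu mu_l.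
by rewrite eqMM' // in_cons mu_l orbT.
Qed.

Lemma kron_mul M M' l : kron M l *m kron M' l = kron (fun nu => M nu *m M' nu) l.
Proof. by elim: l => [|nu l IH] /=; rewrite ?mul1mx // tensmx_mul IH. Qed.

Lemma kron1 l : kron (fun nu => 1%:M : 'M[R]_(n nu)) l = 1%:M.
Proof. by elim: l => [|nu l IH] //=; rewrite IH tensmx11. Qed.

Lemma kron_eq0 M l mu : mu \in l -> M mu = 0 -> kron M l = 0.
Proof.
elim: l => [|nu l IH] //=; rewrite in_cons => /orP[/eqP <- -> | mu_l M0].
  by rewrite tens0mx.
by rewrite IH // tensmx0.
Qed.

Lemma trmx_kron M l : (kron M l)^T = kron (fun nu => (M nu)^T) l.
Proof. by elim: l => [|nu l IH] /=; rewrite ?tr_scalar_mx // trmx_tens IH. Qed.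

Lemma map_kron (f : {rmorphism R -> R}) M l :
  map_mx f (kron M l) = kron (fun nu => map_mx f (M nu)) l.
Proof. by elim: l => [|nu l IH] /=; rewrite ?map_scalar_mx ?rmorph1 // map_mxT IH. Qed.

(* [kron (slot mu M) l] is  1 (x) ... (x) M mu (x) ... (x) 1. *)
Definition slot mu M : forall nu, 'M[R]_(n nu) :=
  fun nu => if nu == mu then M nu else 1%:M.

Lemma kron_slot_notin M l mu : mu \notin l -> kron (slot mu M) l = 1%:M.
Proof.
move=> mu_l; rewrite -(kron1 l); apply: eq_kron => nu nu_l.
by rewrite /slot; case: eqP => // nu_mu; rewrite -nu_mu nu_l in mu_l.
Qed.

Lemma kron_slotD M M' l mu : uniq l -> mu \in l ->
  kron (slot mu (fun nu => M nu + M' nu)) l = kron (slot mu M) l + kron (slot mu M') l.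
Proof.
elim: l => [|nu l IH] //= /andP[nu_l uniq_l]; rewrite in_cons /slot.
case: (eqVneq nu mu) => [<- _ | nu_mu /= mu_l].
  by rewrite -!/(slot nu _) !kron_slot_notin // tensmxDl.
by rewrite -!/(slot mu _) IH // tensmxDr.
Qed.

Lemma kron_slotN M l mu : uniq l -> mu \in l ->
  kron (slot mu (fun nu => - M nu)) l = - kron (slot mu M) l.
Proof.
elim: l => [|nu l IH] //= /andP[nu_l uniq_l]; rewrite in_cons /slot.
case: (eqVneq nu mu) => [<- _ | nu_mu /= mu_l].
  by rewrite -!/(slot nu _) !kron_slot_notin // tensmxNl.
by rewrite -!/(slot mu _) IH // tensmxNr.
Qed.

Lemma trmx_kron_slot M l mu :
  (kron (slot mu M) l)^T = kron (slot mu (fun nu => (M nu)^T)) l.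
Proof.
rewrite trmx_kron; apply: eq_kron => nu _.
by rewrite /slot; case: eqP; rewrite ?tr_scalar_mx.
Qed.

Lemma map_kron_slot (f : {rmorphism R -> R}) M l mu :
  map_mx f (kron (slot mu M) l) = kron (slot mu (fun nu => map_mx f (M nu))) l.
Proof.
rewrite map_kron; apply: eq_kron => nu _.
by rewrite /slot; case: eqP; rewrite ?map_scalar_mx ?rmorph1.
Qed.

Lemma kron_slot_comm M l mu nu :
  kron (slot mu M) l *m kron (slot nu M) l = kron (slot nu M) l *m kron (slot mu M) l.
Proof.
rewrite !kron_mul; apply: eq_kron => k _; rewrite /slot.
by case: (k == mu); case: (k == nu); rewrite ?mul1mx ?mulmx1.
Qed.

Lemma kron_cons_slot M l mu s : mu \notin s ->
  kron (fun nu => if nu \in mu :: s then M nu else 1%:M) l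
  = kron (slot mu M) l *m kron (fun nu => if nu \in s then M nu else 1%:M) l.
Proof.
move=> mu_s; rewrite kron_mul; apply: eq_kron => nu _; rewrite /slot in_cons.
by case: (eqVneq nu mu) => [->|_] /=; rewrite ?(negbTE mu_s) ?mulmx1 ?mul1mx.
Qed.

End Kronecker.

Lemma mxrank_kron (F : fieldType) D (n : 'I_D -> nat) (M : forall nu, 'M[F]_(n nu)) l :
  \rank (kron M l) = (\prod_(nu <- l) \rank (M nu))%N.
Proof.
elim: l => [|nu l IH] /=; first by rewrite big_nil mxrank1.
by rewrite mxrank_tens IH big_cons.
Qed.

Section SkewHermitian.
Variable C : numClosedFieldType.
Local Open Scope sesquilinear_scope.

(* Each [- u *m B i *m B i *m u^t*] is the squared norm of [u *m B i]. *)
Lemma ker_sum_sqr_skew (I : finType) m n (B : I -> 'M[C]_n) (K : 'M[C]_(m, n)) :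
  (forall i, (B i)^t* = - B i) ->
  K *m (\sum_i B i *m B i) = 0 -> forall i, K *m B i = 0.
Proof.
move=> skewB KB0 i0; apply/row_matrixP => j; rewrite row_mul row0.
set u := row j K; have uB0 : u *m (\sum_i B i *m B i) = 0 by rewrite -row_mul KB0 row0.
have normE i : dotmx (u *m B i) (u *m B i) = - (u *m (B i *m B i) *m u^t*) 0 0.
  by rewrite dotmxE trmx_mul map_mxM skewB mulNmx mulmxN mxE !mulmxA.
have sum0 : \sum_i dotmx (u *m B i) (u *m B i) = 0.
  rewrite (eq_bigr _ (fun i _ => normE i)) sumrN -summxE -mulmx_suml -mulmx_sumr uB0.
  by rewrite !mul0mx mxE oppr0.
have norm0 := psumr_eq0P (fun i _ => dnorm_ge0 (@dotmx C n) (u *m B i)) sum0.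
by apply/eqP; rewrite -(dnorm_eq0 (@dotmx C n)) norm0.
Qed.

End SkewHermitian.

Lemma clifford_trN (R : comNzRingType) D r (gam : 'I_D -> 'M[R]_r) :
  clifford gam -> clifford (fun mu => - (gam mu)^T).
Proof.
move=> cl_gam mu nu; rewrite !mulNmx !mulmxN !opprK -!trmx_mul -raddfD /=.
by rewrite addrC cl_gam tr_scalar_mx eq_sym.
Qed.

(* Symmetrizing the double sum, the Clifford relations kill the cross terms. *)
Lemma clifford_sum_sqr (F : fieldType) D r k (A : 'I_D -> 'M[F]_k) (h : 'I_D -> 'M[F]_r) :
  (2 : F) != 0 -> (forall mu nu, A mu *m A nu = A nu *m A mu) -> clifford h ->
  (\sum_mu A mu *t h mu) *m (\sum_mu A mu *t h mu) = \sum_mu (A mu *m A mu) *t 1%:M.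
Proof.
move=> two_neq0 commA cl_h.
have E : (\sum_mu A mu *t h mu) *m (\sum_mu A mu *t h mu)
         = \sum_mu \sum_nu (A mu *m A nu) *t (h mu *m h nu).
  rewrite mulmx_suml; apply: eq_bigr => mu _; rewrite mulmx_sumr.
  by apply: eq_bigr => nu _; rewrite tensmx_mul.
apply: (scalerI two_neq0); rewrite scaler_nat mulr2n {2}E exchange_big /= E -big_split /=.
rewrite scaler_sumr; apply: eq_bigr => mu _; rewrite -big_split /=.
rewrite (eq_bigr (fun nu => (A mu *m A nu) *t (if mu == nu then 2 else 0)%:M)); last first.
  by move=> nu _; rewrite (commA nu mu) -tensmxDr cl_h.
rewrite (bigD1 mu) //= eqxx big1 ?addr0; last first.
  by move=> nu /negbTE; rewrite eq_sym => ->; rewrite -scalemx1 scale0r tensmx0.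
by rewrite -scalemx1; apply/matrixP => i j; rewrite !mxE mulrCA.
Qed.

Section KernelProjector.
Variable F : fieldType.

(* A projection whose row space is the left kernel of [A]. *)
Definition kerproj n (A : 'M[F]_n) := 1%:M - A *m pinvmx A.

Lemma kerproj_mul n (A : 'M[F]_n) : kerproj A *m A = 0.
Proof. by rewrite mulmxBl mul1mx mulmxKpV ?subrr. Qed.

Lemma mxrank_kerproj n (A : 'M[F]_n) : \rank (kerproj A) = \rank (kermx A).
Proof.
apply/eqmx_rank/andP; split; first by apply/sub_kermxP; rewrite kerproj_mul.
have -> : kermx A = kermx A *m kerproj A.
  by rewrite mulmxBr mulmx1 mulmxA mulmx_ker mul0mx subr0.
exact: submxMl.
Qed.

End KernelProjector.

Lemma kron_slot_kerproj (F : fieldType) D (n : 'I_D -> nat) (a : forall nu, 'M[F]_(n nu))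
    l mu : uniq l -> mu \in l ->
  kron (slot mu (fun nu => kerproj (a nu))) l
  = 1%:M - kron (slot mu a) l *m kron (slot mu (fun nu => pinvmx (a nu))) l.
Proof.
move=> uniq_l mu_l; rewrite kron_mul /kerproj kron_slotD // kron_slotN //.
rewrite -(@kron1 _ _ n l); congr (_ - _).
  by apply: eq_kron => nu _; rewrite /slot; case: eqP.
by apply: eq_kron => nu _; rewrite /slot; case: eqP; rewrite ?mulmx1.
Qed.

Section CliffordKernel.
Variables (C : numClosedFieldType) (D r : nat) (n : 'I_D -> nat).
Variables (a : forall nu, 'M[C]_(n nu)) (h : 'I_D -> 'M[C]_r) (l : seq 'I_D).
Hypothesis uniq_l : uniq l.
Hypothesis mem_l : forall mu, mu \in l.
Hypothesis skew_a : forall nu, map_mx Num.conj (a nu)^T = - a nu.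
Hypothesis cl_h : clifford h.

Local Notation A mu := (kron (slot mu a) l).
Local Notation X := (\sum_mu A mu *t h mu).
Local Notation P := (fun nu => kerproj (a nu)).

Lemma ker_kron_slot_tens mu : kermx X *m (A mu *t 1%:M) = 0.
Proof.
apply: (ker_sum_sqr_skew (B := fun mu => A mu *t 1%:M)).
  move=> nu; rewrite trmx_tens map_mxT tr_scalar_mx map_scalar_mx rmorph1.
  rewrite trmx_kron_slot map_kron_slot -tensmxNl -kron_slotN //; congr (_ *t _).
  by apply: eq_kron => k _; rewrite /slot; case: eqP => // _; exact: skew_a.
have -> : \sum_mu (A mu *t 1%:M) *m (A mu *t 1%:M) = X *m X.
  rewrite clifford_sum_sqr ?pnatr_eq0 //; last exact: kron_slot_comm.
  by apply: eq_bigr => nu _; rewrite tensmx_mul mulmx1.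
by rewrite mulmxA mulmx_ker mul0mx.
Qed.

Lemma ker_kron_kerproj_fixed : kermx X *m (kron P l *t 1%:M) = kermx X.
Proof.
have fixed_slot mu : kermx X *m (kron (slot mu P) l *t 1%:M) = kermx X.
  rewrite kron_slot_kerproj // tensmxDl tensmxNl tensmx11 mulmxDr mulmx1 mulmxN.
  rewrite -[Y in _ *t Y](mulmx1 1%:M) -tensmx_mul mulmxA ker_kron_slot_tens.
  by rewrite mul0mx oppr0 addr0.
suff fixed_sub s : uniq s ->
    kermx X *m (kron (fun nu => if nu \in s then P nu else 1%:M) l *t 1%:M) = kermx X.
  by rewrite -[RHS](fixed_sub l uniq_l); congr (_ *m (_ *t _)); apply: eq_kron => nu ->.
elim: s => [_|mu s IH /= /andP[mu_s uniq_s]]; first by rewrite kron1 tensmx11 mulmx1.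
rewrite kron_cons_slot // -[Y in _ *t Y](mulmx1 1%:M) -tensmx_mul mulmxA fixed_slot.
exact: IH.
Qed.

Theorem mxrank_ker_clifford_sum :
  \rank (kermx X) = (\prod_(nu <- l) \rank (kermx (a nu)) * r)%N.
Proof.
have -> : \rank (kermx X) = \rank (kron P l *t (1%:M : 'M[C]_r)).
  apply/eqmx_rank/andP; split; first by rewrite -ker_kron_kerproj_fixed submxMl.
  apply/sub_kermxP; rewrite mulmx_sumr big1 // => mu _.
  rewrite tensmx_mul kron_mul (@kron_eq0 _ _ _ _ _ mu) ?tens0mx //.
  by rewrite /slot eqxx kerproj_mul.
rewrite mxrank_tens mxrank1 mxrank_kron; congr (_ * _)%N.
by apply: eq_bigr => nu _; rewrite mxrank_kerproj.
Qed.

End CliffordKernel.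

Lemma eq_odd_of_step2 (T : Type) (g : nat -> T) n :
  (forall k, (k.+2 < n)%N -> g k = g k.+2) -> forall k, (k < n)%N -> g k = g (odd k).
Proof.
move=> step; elim/ltn_ind => -[|[|k]] IH lt_kn //.
by rewrite -step // IH //= ?negbK // ltnW // ltnW.
Qed.

Lemma modn_succ i n : (i < n)%N -> (i.+1 %% n = if i.+1 == n then 0 else i.+1)%N.
Proof. by move=> lt_in; case: eqP => [->|ne]; rewrite ?modnn // modn_small; lia. Qed.

Section FactorKernel.
Variable F : fieldType.

(* The entry of [u] at the natural index [k], or [0] when [k] is out of range. *)
Definition rv_at n (u : 'rV[F]_n) (k : nat) : F :=
  \sum_(i < n) ((i : nat) == k)%:R * u 0 i.

Lemma rv_at_ord n (u : 'rV[F]_n) (i : 'I_n) : rv_at u i = u 0 i.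
Proof.
rewrite /rv_at (bigD1 i) //= eqxx mul1r big1 ?addr0 // => j.
by rewrite -val_eqE => /negbTE ->; rewrite mul0r.
Qed.

Lemma rv_at_out n (u : 'rV[F]_n) k : (n <= k)%N -> rv_at u k = 0.
Proof.
move=> le_nk; rewrite /rv_at big1 // => i _.
by rewrite ltn_eqF ?mul0r //; exact: leq_trans (ltn_ord i) le_nk.
Qed.

Lemma rv_at_row n (g : nat -> F) k :
  rv_at (\row_(j < n) g j) k = if (k < n)%N then g k else 0.
Proof.
case: ltnP => [lt_kn|]; last exact: rv_at_out.
by change k with (nat_of_ord (Ordinal lt_kn)); rewrite rv_at_ord mxE.
Qed.

Lemma mulmx_col_diff n (u : 'rV[F]_n) (A : 'M[F]_n) j k1 k2 :
  (forall i : 'I_n, A i j = ((i : nat) == k1)%:R - ((i : nat) == k2)%:R) ->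
  (u *m A) 0 j = rv_at u k1 - rv_at u k2.
Proof.
move=> Aj; rewrite mxE /rv_at -sumrB; apply: eq_bigr => i _.
by rewrite Aj mulrBr !(mulrC (u 0 i)).
Qed.

Lemma mxrank_kermx_span m n (A : 'M[F]_n) (V : 'M[F]_(m, n)) :
  V *m A = 0 -> (forall u : 'rV_n, u *m A = 0 -> (u <= V)%MS) ->
  \rank (kermx A) = \rank V.
Proof.
move=> VA0 span; apply/eqmx_rank/andP; split; last exact/sub_kermxP.
by apply/row_subP => i; apply: span; rewrite -row_mul mulmx_ker row0.
Qed.

(* In- and out-neighbour of vertex [j]; for a path they leave [0, n) at the ends. *)
Definition fpred (f : factor) (j : nat) : nat :=
  match f with
  | Cyc n => if j == 0%N then (n - 1)%N else (j - 1)%N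
  | Pth n => if j == 0%N then n else (j - 1)%N
  end.

Definition fsucc (f : factor) (j : nat) : nat :=
  match f with
  | Cyc n => if j.+1 == n then 0%N else j.+1
  | Pth _ => j.+1
  end.

Lemma Aas_fedgeE f (i j : 'I_(nverts f)) : valid_factor f ->
  Aas F (@fedge f) i j = ((i : nat) == fpred f j)%:R - ((i : nat) == fsucc f j)%:R.
Proof.
case: f i j => n i j /= valid; rewrite mxE /fedge ?modn_succ //;
  have lt_in := ltn_ord i; have lt_jn := ltn_ord j.
  case: (i.+1 =P n) => ?; case: (j.+1 =P n) => ?; case: (nat_of_ord j =P 0%N) => ?;
  do ![case: eqP => ?]; rewrite /= ?subr0 ?sub0r //; exfalso; simpl in *; lia.
case: (nat_of_ord j =P 0%N) => ?; do ![case: eqP => ?];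
  rewrite /= ?subr0 ?sub0r //; exfalso; simpl in *; lia.
Qed.

Lemma Aas_fedge_kerP f (u : 'rV[F]_(nverts f)) : valid_factor f ->
  reflect (forall j : 'I_(nverts f), rv_at u (fpred f j) = rv_at u (fsucc f j))
          (u *m Aas F (@fedge f) == 0).
Proof.
move=> valid_f; have col j := mulmx_col_diff u (fun i => Aas_fedgeE i j valid_f).
apply: (iffP eqP) => [uA0 j | cond]; last by apply/rowP => j; rewrite col cond subrr mxE.
by apply/eqP; rewrite -subr_eq0 -col uA0 mxE.
Qed.

Lemma ker_fedge_odd f (u : 'rV[F]_(nverts f)) : valid_factor f ->
  u *m Aas F (@fedge f) = 0 -> forall k, (k < nverts f)%N -> rv_at u k = rv_at u (odd k).
Proof.
move=> valid_f /eqP /(Aas_fedge_kerP _ valid_f) cond; apply: eq_odd_of_step2 => k lt_k2n.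
have := cond (Ordinal (ltnW lt_k2n)).
by case: f u cond valid_f lt_k2n => n u _ _ lt_k2n /=; rewrite ?ltn_eqF // subn1.
Qed.

Definition parity_rv n (b : bool) : 'rV[F]_n := \row_(j < n) (odd j == b)%:R.

Lemma ker_fedge_parity f (u : 'rV[F]_(nverts f)) : valid_factor f ->
  u *m Aas F (@fedge f) = 0 ->
  u = rv_at u 0 *: parity_rv _ false + rv_at u 1 *: parity_rv _ true.
Proof.
move=> valid_f uA0; apply/rowP => j.
rewrite !mxE -(rv_at_ord u j) (ker_fedge_odd valid_f uA0) //.
by case: (odd j); rewrite /= ?mulr1 ?mulr0 ?addr0 ?add0r.
Qed.

Lemma cycle_neighbours n j : (3 <= n)%N -> (j < n)%N ->
  [/\ (fpred (Cyc n) j < n)%N, (fsucc (Cyc n) j < n)%N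
    & ~~ odd n -> odd (fpred (Cyc n) j) = odd (fsucc (Cyc n) j)].
Proof. by move=> le3n lt_jn /=; do 2 case: eqP => ?; split => *; lia. Qed.

Lemma ker_cycle_wrap n (u : 'rV[F]_n) : (3 <= n)%N ->
  u *m Aas F (@fedge (Cyc n)) = 0 -> rv_at u (n - 2) = rv_at u 0.
Proof.
move=> le3n /eqP /(@Aas_fedge_kerP (Cyc n) _ le3n) cond.
have lt_n1 : (n - 1 < n)%N by lia.
have n1_neq0 : (n - 1 == 0)%N = false by apply/eqP; lia.
have [n1S n11] : (n - 1).+1 = n /\ (n - 1 - 1 = n - 2)%N by lia.
by have := cond (Ordinal lt_n1); rewrite /= n1_neq0 n1S eqxx n11.
Qed.

Lemma ker_path_ends n (u : 'rV[F]_n) : (2 <= n)%N ->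
  u *m Aas F (@fedge (Pth n)) = 0 -> rv_at u 1 = 0 /\ rv_at u (n - 2) = 0.
Proof.
move=> le2n /eqP /(@Aas_fedge_kerP (Pth n) _ le2n) cond; split.
  by have := cond (Ordinal (ltnW le2n)); rewrite /= rv_at_out // => <-.
have lt_n1 : (n - 1 < n)%N by lia.
have n1_neq0 : (n - 1 == 0)%N = false by apply/eqP; lia.
have [n1S n11] : (n - 1).+1 = n /\ (n - 1 - 1 = n - 2)%N by lia.
by have := cond (Ordinal lt_n1); rewrite /= n1_neq0 n1S n11 (rv_at_out u (leqnn n)).
Qed.

Lemma mxrank_ker_cycle_odd n : (3 <= n)%N -> odd n ->
  \rank (kermx (Aas F (@fedge (Cyc n)))) = 1%N.
Proof.
move=> le3n odd_n; have lt0n : (0 < n)%N by lia.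
rewrite (@mxrank_kermx_span _ _ _ (\row_(j < n) 1)).
- rewrite rank_rV; case: eqP => // /rowP /(_ (Ordinal lt0n)) /eqP.
  by rewrite !mxE oner_eq0.
- apply/eqP/(@Aas_fedge_kerP (Cyc n)) => // j.
  rewrite /nverts /= !(@rv_at_row _ (fun _ => 1)).
  by have [-> -> _] := cycle_neighbours le3n (ltn_ord j).
move=> u uA0; rewrite (@ker_fedge_parity (Cyc n) u le3n uA0) /nverts /=.
have [lt_n2 odd_n2] : (n - 2 < n)%N /\ odd (n - 2) by lia.
have -> : rv_at u 1 = rv_at u 0.
  by rewrite -(ker_cycle_wrap le3n uA0) (@ker_fedge_odd (Cyc n) u le3n uA0 _ lt_n2) odd_n2.
rewrite -scalerDr (_ : parity_rv n false + parity_rv n true = \row_(j < n) 1).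
  by rewrite scalemx_sub.
by apply/rowP => j; rewrite !mxE; case: (odd j); rewrite /= ?add0r ?addr0.
Qed.

Lemma mxrank_ker_cycle_even n : (3 <= n)%N -> ~~ odd n ->
  \rank (kermx (Aas F (@fedge (Cyc n)))) = 2%N.
Proof.
move=> le3n even_n; pose V := \matrix_(b < 2, j < n) (odd j == odd b)%:R : 'M[F]_(2, n).
have rowV b : row b V = parity_rv n (odd b) by apply/rowP => j; rewrite !mxE.
rewrite (@mxrank_kermx_span _ _ _ V).
- apply/eqP; rewrite eqn_leq rank_leq_row /=.
  pose W := \matrix_(j < n, b < 2) ((j : nat) == b)%:R : 'M[F]_(n, 2).
  suff VW : V *m W = 1%:M by have := mxrankM_maxl V W; rewrite VW mxrank1.
  apply/matrixP => b c; have lt_cn : (c < n)%N by have := ltn_ord c; lia.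
  rewrite !mxE (bigD1 (Ordinal lt_cn)) //= big1 ?addr0 => [|j]; last first.
    by rewrite -val_eqE /= => /negbTE neq_jc; rewrite !mxE neq_jc mulr0.
  rewrite !mxE eqxx mulr1.
  by case: b c lt_cn => -[|[|?]] ? [[|[|?]] ?].
- apply/row_matrixP => b; rewrite row_mul row0 rowV.
  apply/eqP/(@Aas_fedge_kerP (Cyc n)) => // j.
  rewrite /nverts /parity_rv /= !(@rv_at_row _ (fun j => (odd j == odd b)%:R)).
  by have [-> -> ->] := cycle_neighbours le3n (ltn_ord j).
move=> u uA0; rewrite (@ker_fedge_parity (Cyc n) u le3n uA0) /nverts /=.
rewrite -[parity_rv n false](rowV 0) -[parity_rv n true](rowV 1).
by rewrite addmx_sub // scalemx_sub // row_sub.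
Qed.

Lemma mxrank_ker_path_odd n : (2 <= n)%N -> odd n ->
  \rank (kermx (Aas F (@fedge (Pth n)))) = 1%N.
Proof.
move=> le2n odd_n; rewrite (@mxrank_kermx_span _ _ _ (parity_rv n false)).
- rewrite rank_rV; case: eqP => // /rowP /(_ (Ordinal (ltnW le2n))) /eqP.
  by rewrite !mxE oner_eq0.
- apply/eqP/(@Aas_fedge_kerP (Pth n)) => // -[j /= lt_jn].
  rewrite /nverts /parity_rv /= !(@rv_at_row _ (fun j => (odd j == false)%:R)) /=.
  case: (j =P 0%N) => [-> | j_neq0] /=; first by rewrite ltnn le2n.
  have lt_j1 : (j - 1 < n)%N by lia.
  rewrite lt_j1; case: ltnP => [lt_j1n | le_nj1].
    have jS : j = (j - 1).+1 by lia.
    by rewrite [in RHS]jS /= negbK.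
  have jS : n = (j - 1).+2 by lia.
  by move: odd_n; rewrite jS /= negbK => ->.
move=> u uA0; rewrite (@ker_fedge_parity (Pth n) u le2n uA0) /nverts /=.
by have [-> _] := ker_path_ends le2n uA0; rewrite scale0r addr0 scalemx_sub.
Qed.

Lemma mxrank_ker_path_even n : (2 <= n)%N -> ~~ odd n ->
  \rank (kermx (Aas F (@fedge (Pth n)))) = 0%N.
Proof.
move=> le2n even_n; rewrite (@mxrank_kermx_span _ _ _ (0 : 'rV_n)) ?mxrank0 ?mul0mx //.
move=> u uA0; have [u1 u_n2] := ker_path_ends le2n uA0.
have [lt_n2 even_n2] : (n - 2 < n)%N /\ odd (n - 2) = false by lia.
have u0 : rv_at u 0 = 0.
  by rewrite -u_n2 (@ker_fedge_odd (Pth n) u le2n uA0 _ lt_n2) even_n2.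
by rewrite (@ker_fedge_parity (Pth n) u le2n uA0) u0 u1 !scale0r addr0 sub0mx.
Qed.

Definition factor_nullity (f : factor) : nat :=
  match f with
  | Cyc n => if odd n then 1 else 2
  | Pth n => if odd n then 1 else 0
  end.

Lemma mxrank_ker_fedge f : valid_factor f ->
  \rank (kermx (Aas F (@fedge f))) = factor_nullity f.
Proof.
case: f => n /= valid; case: ifP => [odd_n | /negbT even_n].
- exact: mxrank_ker_cycle_odd.
- exact: mxrank_ker_cycle_even.
- exact: mxrank_ker_path_odd.
- exact: mxrank_ker_path_even.
Qed.

End FactorKernel.

Lemma trmx_Aas (R : nzRingType) n (e : rel 'I_n) :
  (forall i j, e i j -> ~~ e j i) -> (Aas R e)^T = - Aas R e.
Proof.
move=> asym_e; apply/matrixP => i j; rewrite !mxE.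
case eji: (e j i); case eij: (e i j); rewrite ?opprK ?oppr0 //.
by have := asym_e _ _ eji; rewrite eij.
Qed.

Lemma map_Aas (R R' : nzRingType) (f : {rmorphism R -> R'}) n (e : rel 'I_n) :
  map_mx f (Aas R e) = Aas R' e.
Proof.
apply/matrixP => i j; rewrite !mxE.
by case: (e i j); case: (e j i); rewrite ?rmorph1 ?rmorphN1 ?rmorph0.
Qed.

Lemma fedge_asym f : valid_factor f -> forall i j, @fedge f i j -> ~~ @fedge f j i.
Proof.
case: f => n /= valid [i lt_in] [j lt_jn]; rewrite /fedge /= ?modn_succ //.
  case: (i.+1 =P n) => ?; case: (j.+1 =P n) => ? /eqP ji; apply/eqP => ij; lia.
by move=> /eqP ji; apply/eqP => ij; lia.
Qed.

Lemma prod_factor_nullity D (G : 'I_D -> factor) :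
  (\prod_(nu < D) factor_nullity (G nu)
   = if [forall mu, ~~ is_even_path (G mu)]
     then 2 ^ #|[pred mu | is_even_cycle (G mu)]| else 0)%N.
Proof.
case: ifP => [/forallP no_even_path | /negbT].
  rewrite (eq_bigr (fun nu => if is_even_cycle (G nu) then 2 else 1)%N) => [|nu _].
    by rewrite -big_mkcond prod_nat_const.
  by have := no_even_path nu; case: (G nu) => n /=; case: (odd n).
rewrite negb_forall => /existsP[nu]; rewrite negbK => even_path_nu.
rewrite (bigD1 nu) //= (_ : factor_nullity (G nu) = 0%N) //.
by move: even_path_nu; case: (G nu) => n //= /negbTE ->.
Qed.

Theorem mainTheorem7 (R : realType) (D r : nat) (G : 'I_D -> factor)
    (gam : 'I_D -> 'M[R[i]]_r) :
  (forall mu, valid_factor (G mu)) ->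
  clifford gam ->
  let c_even := #|[pred mu : 'I_D | is_even_cycle (G mu)]| in
  let no_even_path := [forall mu : 'I_D, ~~ is_even_path (G mu)] in
  dimker (Dop G gam) = (if no_even_path then r * 2 ^ c_even else 0)%N /\
  (no_even_path -> (r <= dimker (Dop G gam))%N).
Proof.
move=> valid_G cl_gam c_even no_even_path.
pose a nu := Aas R[i] (@fedge (G nu)).
pose l := rev (enum 'I_D).
have uniq_l : uniq l by rewrite rev_uniq enum_uniq.
have mem_l mu : mu \in l by rewrite mem_rev mem_enum.
have skew_a nu : (a nu)^T = - a nu by exact/trmx_Aas/fedge_asym.
have DopT : (Dop G gam)^T = \sum_mu kron (slot mu a) l *t - (gam mu)^T.
  apply: (big_ind2 (fun A B => A^T = B)) => [|A1 B1 A2 B2 <- <-|mu _].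
  - exact: trmx0.
  - by apply/matrixP => i j; rewrite !mxE.
  rewrite trmx_tens trmx_kron_slot tensmxNr -tensmxNl -kron_slotN //; congr (_ *t _).
  by apply: eq_kron => nu _; rewrite /slot; case: eqP => // _; exact: skew_a.
have skew_aC nu : map_mx Num.conj (a nu)^T = - a nu by rewrite skew_a map_mxN map_Aas.
have dimE : dimker (Dop G gam) = (\prod_(nu < D) factor_nullity (G nu) * r)%N.
  rewrite /dimker DopT mxrank_ker_clifford_sum //; last exact: clifford_trN.
  rewrite /l big_rev big_enum /=; congr (_ * _)%N.
  by apply: eq_bigr => nu _; exact: mxrank_ker_fedge.
rewrite dimE prod_factor_nullity -/c_even -/no_even_path mulnC.
split; first by case: ifP; rewrite ?muln0.
by move=> ->; rewrite leq_pmulr // expn_gt0.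
Qed.
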